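(* Let $\mathcal F=(f_t)$ be a continuous flow on a compact metric space $(X,d)$ and $\varepsilon>0$. Then $\mathrm{NE}^\times(\varepsilon)=(X\times\mathrm{NE}(\varepsilon))\cup(\mathrm{NE}(\varepsilon)\times X)$.
   Context: $\Gamma_\varepsilon(x)=\{y: d(f_tx,f_ty)<\varepsilon\ \forall t\in\mathbb{R}\}$ and $\mathrm{NE}(\varepsilon)=\{x:\Gamma_\varepsilon(x)\not\subset f_{[-s,s]}(x)\text{ for every } s>0\}$, where $f_{[-s,s]}(x)=\{f_rx:r\in[-s,s]\}$. On $X\times X$ with metric $\tilde d((x,y),(w,z))=\max\{d(x,w),d(y,z)\}$ and product flow $(f_t\times f_t)$: $\Gamma_\varepsilon(x,y)=\{(x',y'):\tilde d((f_tx,f_ty),(f_tx',f_ty'))<\varepsilon\ \forall t\in\mathbb{R}\}$ and $\mathrm{NE}^\times(\varepsilon)=\{(x,y):\Gamma_\varepsilon(x,y)\not\subset f_{[-s,s]}(x)\times f_{[-s,s]}(y)\text{ for any }s>0\}$. *)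

From Stdlib Require Import Reals.
Open Scope R_scope.

Definition is_metric {X : Type} (d : X -> X -> R) : Prop :=
  (forall x y, 0 <= d x y) /\
  (forall x y, d x y = 0 <-> x = y) /\
  (forall x y, d x y = d y x) /\
  (forall x y z, d x z <= d x y + d y z).

Definition compact_metric {X : Type} (d : X -> X -> R) : Prop :=
  forall u : nat -> X, exists (phi : nat -> nat) (l : X),
    (forall n, (phi n < phi (S n))%nat) /\
    (forall e, 0 < e -> exists N, forall n, (N <= n)%nat -> d (u (phi n)) l < e).

Definition continuous_flow {X : Type} (d : X -> X -> R) (f : R -> X -> X) : Prop :=
  (forall x, f 0 x = x) /\
  (forall s t x, f (s + t) x = f s (f t x)) /\
  (forall t x e, 0 < e -> exists delta, 0 < delta /\
     forall t' x', Rabs (t' - t) < delta -> d x x' < delta ->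
       d (f t x) (f t' x') < e).

Definition Gamma {X : Type} (d : X -> X -> R) (f : R -> X -> X) (eps : R) (x : X)
  : X -> Prop := fun y => forall t, d (f t x) (f t y) < eps.

Definition orbit_seg {X : Type} (f : R -> X -> X) (s : R) (x : X) : X -> Prop :=
  fun y => exists r, -s <= r <= s /\ y = f r x.

Definition NE {X : Type} (d : X -> X -> R) (f : R -> X -> X) (eps : R) (x : X) : Prop :=
  forall s, 0 < s -> ~ (forall y, Gamma d f eps x y -> orbit_seg f s x y).

Definition dprod {X : Type} (d : X -> X -> R) (p q : X * X) : R :=
  Rmax (d (fst p) (fst q)) (d (snd p) (snd q)).

Definition Gamma_prod {X : Type} (d : X -> X -> R) (f : R -> X -> X) (eps : R)
  (p : X * X) : X * X -> Prop :=
  fun q => forall t, dprod d (f t (fst p), f t (snd p)) (f t (fst q), f t (snd q)) < eps.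

Definition NE_prod {X : Type} (d : X -> X -> R) (f : R -> X -> X) (eps : R)
  (p : X * X) : Prop :=
  forall s, 0 < s -> ~ (forall q, Gamma_prod d f eps p q ->
     orbit_seg f s (fst p) (fst q) /\ orbit_seg f s (snd p) (snd q)).

(* A pair q is eps-close to p along the product flow exactly when each coordinate of q is
   eps-close to the corresponding coordinate of p, because the max metric is below eps iff
   both coordinates are.  If the orbit segments of both a and b absorb their Gamma-sets,
   a common length works for the pair.  Conversely, if a is non-expansive, pairing the
   points of Gamma(a) with b itself (which lies in Gamma(b)) shows that (a, b) is
   non-expansive too. *)

From Stdlib Require Import Reals Lra Classical.
Open Scope R_scope.

Section NonExpansivePairs.

Variables (X : Type) (d : X -> X -> R) (f : R -> X -> X) (eps : R).

Definition Gamma_in_seg (s : R) (x : X) : Prop :=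
  forall y, Gamma d f eps x y -> orbit_seg f s x y.

Lemma orbit_seg_mono s s' x y :
  s <= s' -> orbit_seg f s x y -> orbit_seg f s' x y.
Proof. intros Hss' [r [Hr ->]]. exists r. split; [lra | reflexivity]. Qed.

Lemma Gamma_in_seg_mono s s' x :
  s <= s' -> Gamma_in_seg s x -> Gamma_in_seg s' x.
Proof. intros Hss' Hx y Hy. apply orbit_seg_mono with s; auto. Qed.

Lemma not_NE_Gamma_in_seg x :
  ~ NE d f eps x -> exists s, 0 < s /\ Gamma_in_seg s x.
Proof.
  intros Hx. apply NNPP. intros Hno. apply Hx. intros s Hs Hseg.
  apply Hno. exists s. split; assumption.
Qed.

Lemma Gamma_prod_iff p q :
  Gamma_prod d f eps p q <->
  Gamma d f eps (fst p) (fst q) /\ Gamma d f eps (snd p) (snd q).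
Proof.
  unfold Gamma_prod, Gamma, dprod; simpl. split.
  - intros H. split; intro t; specialize (H t).
    + exact (Rle_lt_trans _ _ _ (Rmax_l _ _) H).
    + exact (Rle_lt_trans _ _ _ (Rmax_r _ _) H).
  - intros [H1 H2] t. apply Rmax_lub_lt; auto.
Qed.

Hypothesis Hd : is_metric d.
Hypothesis Heps : 0 < eps.

Lemma Gamma_refl x : Gamma d f eps x x.
Proof.
  destruct Hd as [_ [Hzero _]]. intro t.
  replace (d (f t x) (f t x)) with 0 by (symmetry; apply Hzero; reflexivity).
  exact Heps.
Qed.

Lemma NE_prod_of_NE_fst a b : NE d f eps a -> NE_prod d f eps (a, b).
Proof.
  intros Ha s Hs Hpair. apply (Ha s Hs). intros y Hy.
  apply (Hpair (y, b)). apply Gamma_prod_iff. split; [exact Hy | apply Gamma_refl].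
Qed.

Lemma NE_prod_of_NE_snd a b : NE d f eps b -> NE_prod d f eps (a, b).
Proof.
  intros Hb s Hs Hpair. apply (Hb s Hs). intros y Hy.
  apply (Hpair (a, y)). apply Gamma_prod_iff. split; [apply Gamma_refl | exact Hy].
Qed.

Lemma NE_fst_or_snd_of_NE_prod a b :
  NE_prod d f eps (a, b) -> NE d f eps b \/ NE d f eps a.
Proof.
  intros Hab. apply NNPP. intros Hneither.
  destruct (not_NE_Gamma_in_seg a) as [sa [Hsa Ga]]; [tauto |].
  destruct (not_NE_Gamma_in_seg b) as [sb [Hsb Gb]]; [tauto |].
  apply (Hab (Rmax sa sb)).
  - exact (Rlt_le_trans _ _ _ Hsa (Rmax_l _ _)).
  - intros q Hq. apply Gamma_prod_iff in Hq as [Hq1 Hq2]. split.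
    + exact (Gamma_in_seg_mono _ _ _ (Rmax_l _ _) Ga _ Hq1).
    + exact (Gamma_in_seg_mono _ _ _ (Rmax_r _ _) Gb _ Hq2).
Qed.

End NonExpansivePairs.

Theorem lemma4p4 (X : Type) (d : X -> X -> R) (f : R -> X -> X) (eps : R)
  (Hd : is_metric d) (Hc : compact_metric d) (Hf : continuous_flow d f)
  (Heps : 0 < eps) :
  forall p : X * X,
    NE_prod d f eps p <-> (NE d f eps (snd p) \/ NE d f eps (fst p)).
Proof.
  intros [a b]; simpl. split.
  - apply NE_fst_or_snd_of_NE_prod.
  - intros [Hb | Ha].
    + exact (NE_prod_of_NE_snd _ _ _ _ Hd Heps a b Hb).
    + exact (NE_prod_of_NE_fst _ _ _ _ Hd Heps a b Ha).
Qed.
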